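(* For any $n\times n$ symmetric matrix $w$ with nonnegative entries and $H=\sum_{i<j}w_{ij}E_{ij}$, \[\lambda_{\max}(H)\le\frac{\sum_{i<j}w_{ij}+\mathrm{LP}(w)}{2},\] where $\mathrm{LP}(w)$ is the optimum of the fractional matching linear program $\max\sum_{i<j}w_{ij}x_{ij}$ subject to $\sum_{j\ne i}x_{ij}\le1$ for all $i\in[n]$ and $x_{ij}\ge0$.
   Context: $E_{ij}$ is the projection onto $\ket{\mathrm{EPR}}=\frac{\ket{00}+\ket{11}}{\sqrt2}$ on qubits $i,j$ tensored with identity elsewhere; $\lambda_{\max}(H)$ is the largest eigenvalue. You may use the star bound: for any $n$-qubit state $\rho$ and $i\in[n]$, $\sum_{j\ne i}\max(0,2\operatorname{tr}(\rho E_{ij})-1)\le1$. *)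

From HB Require Import structures.
From mathcomp Require Import all_boot all_order all_algebra.
From mathcomp Require Import classical_sets reals.
Set Implicit Arguments. Unset Strict Implicit. Unset Printing Implicit Defensive.
Import Order.TTheory GRing.Theory Num.Theory.
Local Open Scope ring_scope.
Local Open Scope classical_set_scope.

(* n-qubit computational basis states are indexed by k : 'I_(2^n);
   the value of qubit i in basis state k is bit i of k. *)
Definition qbit (n : nat) (k : 'I_(2 ^ n)) (i : 'I_n) : bool := odd (k %/ 2 ^ i).

(* E_ij = |EPR><EPR| on qubits i,j tensored with identity elsewhere,
   with |EPR> = (|00>+|11>)/sqrt 2.  Entry <a|E_ij|b> equals
   [a and b agree on all qubits other than i,j] *
   <a_i a_j|EPR><EPR|b_i b_j> = [..] * (1/2)[a_i = a_j][b_i = b_j]. *)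
Definition Eproj (R : fieldType) (n : nat) (i j : 'I_n) : 'M[R]_(2 ^ n) :=
  \matrix_(a, b)
    (if [forall l : 'I_n, (l != i) && (l != j) ==> (qbit a l == qbit b l)]
        && (qbit a i == qbit a j) && (qbit b i == qbit b j)
     then 2%:R^-1 else 0).

Definition Hw (R : fieldType) (n : nat) (w : 'M[R]_n) : 'M[R]_(2 ^ n) :=
  \sum_(i < n) \sum_(j < n | (i < j)%N) w i j *: Eproj R i j.

Definition lambda_max (R : realType) (m : nat) (A : 'M[R]_m) : R :=
  sup [set a : R | eigenvalue A a].

(* feasible points of the fractional matching LP; a variable x_ij (i<j) is
   represented by a symmetric function x with x i j = x j i. *)
Definition fm_feasible (R : realType) (n : nat) (x : 'I_n -> 'I_n -> R) : Prop :=
  (forall i j, x i j = x j i) /\ (forall i j, 0 <= x i j) /\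
  (forall i : 'I_n, \sum_(j < n | j != i) x i j <= 1).

Definition fm_objective (R : realType) (n : nat) (w : 'M[R]_n)
  (x : 'I_n -> 'I_n -> R) : R :=
  \sum_(i < n) \sum_(j < n | (i < j)%N) w i j * x i j.

Definition LP (R : realType) (n : nat) (w : 'M[R]_n) : R :=
  sup [set v : R | exists x, fm_feasible x /\ v = fm_objective w x].

From HB Require Import structures.
From mathcomp Require Import all_boot all_order all_algebra.
From mathcomp Require Import classical_sets reals.
From mathcomp Require Import boolp ring lra.
Import Order.TTheory GRing.Theory Num.Theory.
Local Open Scope ring_scope.
Set Implicit Arguments. Unset Strict Implicit.

(* Let v be an eigenvector of H with eigenvalue lam and p_ij = <v|E_ij|v>/<v|v>,
   so that lam = sum_{i<j} w_ij p_ij.  The star bound says that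
   x_ij = max(0, 2 p_ij - 1) is a fractional matching, and since
   p_ij <= (1 + x_ij)/2 this gives lam <= (sum w + sum w x)/2 <= (sum w + LP w)/2.
   The star bound itself, in the form sum_{j in S} p_ij <= (|S| + 1)/2 for
   i \notin S, is a Schur test: with the weight c(a) = #{j in S | a_j = a_i},
   every row of E_ij (j in S) sums c to (|S| + 1)/2 on its support. *)

Lemma nat_bits_inj (n k k' : nat) : (k < 2 ^ n)%N -> (k' < 2 ^ n)%N ->
  (forall l, (l < n)%N -> odd (k %/ 2 ^ l) = odd (k' %/ 2 ^ l)) -> k = k'.
Proof.
elim: n k k' => [|n IH] k k' hk hk' hb.
  by move: hk hk'; rewrite expn0 !ltnS !leqn0 => /eqP-> /eqP->.
have h0 := hb 0%N (ltn0Sn n); rewrite !expn0 !divn1 in h0.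
have half_eq : (k %/ 2 = k' %/ 2)%N.
  apply: IH; rewrite ?ltn_divLR -?expnSr //.
  by move=> l hl; rewrite -!divnMA -expnS; exact: hb.
by rewrite (divn_eq k 2) (divn_eq k' 2) half_eq !modn2 h0.
Qed.

Lemma qbit_inj (n : nat) (a b : 'I_(2 ^ n)) :
  (forall l, qbit a l = qbit b l) -> a = b.
Proof.
move=> h; apply: val_inj; apply: (@nat_bits_inj n); rewrite ?ltn_ord //.
by move=> l hl; exact: (h (Ordinal hl)).
Qed.

Lemma qbit_onto (n : nat) (f : 'I_n -> bool) :
  exists b : 'I_(2 ^ n), forall l, qbit b l = f l.
Proof.
pose bits (a : 'I_(2 ^ n)) := [ffun l => qbit a l].
have bits_inj : injective bits.
  by move=> a b /ffunP h; apply: qbit_inj => l; have := h l; rewrite !ffunE.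
have := inj_card_onto bits_inj; rewrite card_ffun card_bool !card_ord leqnn.
move=> /(_ isT (finfun f)) /codomP [b hb]; exists b => l.
by have := congr1 (fun g : {ffun _ -> _} => g l) hb; rewrite /bits !ffunE.
Qed.

Section EPRProjector.
Variables (R : realType) (n : nat).
Implicit Types (i j : 'I_n) (a b : 'I_(2 ^ n)).

Lemma EprojC i j : Eproj R i j = Eproj R j i.
Proof.
apply/matrixP => a b; rewrite !mxE.
rewrite (eq_forallb (fun l => congr1 (implb^~ _) (andbC (l != i) (l != j)))).
by rewrite (eq_sym (qbit a j)) (eq_sym (qbit b j)).
Qed.

Lemma Eproj_sym i j a b : Eproj R i j a b = Eproj R i j b a.
Proof.
rewrite !mxE (eq_forallb (fun l => congr1 (implb _) (eq_sym (qbit a l) (qbit b l)))).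
by rewrite -andbA (andbC (qbit a i == _)) andbA.
Qed.

Lemma Eproj_ge0 i j a b : 0 <= Eproj R i j a b.
Proof. by rewrite mxE; case: ifP => // _; rewrite invr_ge0 ler0n. Qed.

Lemma Eproj_neq0 i j a b : Eproj R i j a b != 0 ->
  qbit a i = qbit a j /\ qbit b i = qbit b j.
Proof. by rewrite mxE; case: ifP => [/andP[/andP[_ /eqP ->] /eqP ->] | _]; rewrite ?eqxx. Qed.

Lemma Eproj_row_sum i j a a' (g : 'I_(2 ^ n) -> R) : i != j ->
  (forall l, qbit a' l = if (l == i) || (l == j) then ~~ qbit a l else qbit a l) ->
  \sum_b Eproj R i j a b * g b =
    if qbit a i == qbit a j then (g a + g a') / 2%:R else 0.
Proof.
move=> nij ha'.
case: eqP => hij; last first.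
  by apply: big1 => b _; rewrite mxE; case: ifP => [/andP[/andP[_ /eqP]] | _]; rewrite ?mul0r.
have a'_neq : a' != a.
  by apply/eqP => e; have := ha' i; rewrite e eqxx /=; case: (qbit a i).
rewrite (bigD1 a) //= (bigD1 a') //= big1 ?addr0; last first.
  move=> b /andP[nba nba']; rewrite mxE; case: ifP; last by rewrite mul0r.
  move=> /andP[/andP[/forallP off_ij _] /eqP hbi]; exfalso.
  have agree l : l != i -> l != j -> qbit b l = qbit a l.
    by move=> li lj; have /implyP/(_ _)/eqP := off_ij l; rewrite li lj => ->.
  case: (boolP (qbit b i == qbit a i)) => [/eqP e | ne].
  - move/eqP: nba; apply; apply: qbit_inj => l.
    case: (eqVneq l i) => [-> // | li]; case: (eqVneq l j) => [-> | lj].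
      by rewrite -hbi e hij.
    exact: agree.
  - move/eqP: nba'; apply; apply: qbit_inj => l; rewrite ha'.
    case: (eqVneq l i) => [-> | li] /=; first by move: ne; case: (qbit b i); case: (qbit a i).
    case: (eqVneq l j) => [-> | lj] /=; last exact: agree.
    by move: ne; rewrite -hbi hij; case: (qbit b i); case: (qbit a j).
have off_aa : [forall l : 'I_n, (l != i) && (l != j) ==> (qbit a l == qbit a l)].
  by apply/forallP => l; rewrite eqxx implybT.
have off_aa' : [forall l : 'I_n, (l != i) && (l != j) ==> (qbit a l == qbit a' l)].
  by apply/forallP => l; apply/implyP => /andP[li lj]; rewrite ha' (negbTE li) (negbTE lj).
have diag_a' : qbit a' i == qbit a' j by rewrite !ha' !eqxx orbT hij.
by rewrite !mxE off_aa off_aa' diag_a' hij eqxx mulrDl !(mulrC _ 2%:R^-1).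
Qed.

End EPRProjector.

Lemma weighted_amgm (R : realFieldType) (x y r s : R) : 0 < r -> 0 < s ->
  x * y <= s / r * x ^+ 2 / 2%:R + r / s * y ^+ 2 / 2%:R.
Proof.
move=> r0 s0; rewrite -subr_ge0.
have -> : s / r * x ^+ 2 / 2%:R + r / s * y ^+ 2 / 2%:R - x * y =
          (s * x - r * y) ^+ 2 / (2%:R * r * s) by field; rewrite ?gt_eqF.
by rewrite divr_ge0 ?sqr_ge0 // !mulr_ge0 ?ltW.
Qed.

Definition qform (R : comPzRingType) (m : nat) (v : 'rV[R]_m) (A : 'M[R]_m) : R :=
  \sum_a \sum_b v 0 a * A a b * v 0 b.

Definition sqnorm (R : comPzRingType) (m : nat) (v : 'rV[R]_m) : R := \sum_a v 0 a ^+ 2.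

Section QuadraticForm.
Variables (R : comPzRingType) (m : nat) (v : 'rV[R]_m).

Lemma qformD : {morph qform v : A B / A + B}.
Proof.
move=> A B; rewrite /qform -big_split; apply: eq_bigr => a _.
by rewrite -big_split; apply: eq_bigr => b _; rewrite !mxE mulrDr mulrDl.
Qed.

Lemma qform0 : qform v 0 = 0.
Proof. by rewrite /qform big1 // => a _; rewrite big1 // => b _; rewrite mxE mulr0 mul0r. Qed.

Lemma qformZ c A : qform v (c *: A) = c * qform v A.
Proof.
rewrite /qform mulr_sumr; apply: eq_bigr => a _.
by rewrite mulr_sumr; apply: eq_bigr => b _; rewrite mxE; ring.
Qed.

Lemma qform_eigen (A : 'M[R]_m) lam : v *m A = lam *: v ->
  qform v A = lam * sqnorm v.
Proof.
move=> hv; rewrite /qform exchange_big /sqnorm mulr_sumr; apply: eq_bigr => b _.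
have := congr1 (fun M : 'rV_m => M 0 b) hv; rewrite !mxE => e.
by rewrite -mulr_suml e; ring.
Qed.

End QuadraticForm.

Section StarBound.
Variables (R : realType) (n : nat) (v : 'rV[R]_(2 ^ n)) (i : 'I_n) (S : {set 'I_n}).
Hypothesis iNS : i \notin S.

Definition agree_count (a : 'I_(2 ^ n)) : R :=
  \sum_(l in S) ((qbit a l == qbit a i)%:R : R).

Lemma agree_count_gt0 a j : j \in S -> qbit a i = qbit a j -> 0 < agree_count a.
Proof.
move=> jS h; rewrite /agree_count (bigD1 j) //= h eqxx.
by rewrite ltr_pwDl ?ltr01 // sumr_ge0 // => l _; rewrite ler0n.
Qed.

Lemma agree_count_flip j a a' : j \in S -> qbit a i = qbit a j ->
  (forall l, qbit a' l = if (l == i) || (l == j) then ~~ qbit a l else qbit a l) ->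
  agree_count a + agree_count a' = #|S|%:R + 1.
Proof.
move=> jS hij ha'; rewrite /agree_count -big_split /=.
rewrite (eq_bigr (fun l => 1 + ((l == j)%:R : R))); last first.
  move=> l lS; have li : l != i by apply: contraNneq iNS => <-.
  rewrite !ha' (negbTE li) eqxx /=.
  case: (eqVneq l j) => [-> | lj] /=; first by rewrite hij !eqxx.
  by case: (qbit a l); case: (qbit a i); rewrite /= ?addr0 ?add0r.
rewrite big_split /= sumr_const (bigD1 j) //= eqxx big1 ?addr0 //.
by move=> l /andP[_ /negbTE->].
Qed.

Lemma Eproj_row_agree_count j a : j \in S ->
  \sum_b Eproj R i j a b * agree_count b =
    (qbit a j == qbit a i)%:R * ((#|S|%:R + 1) / 2%:R).
Proof.
move=> jS; have nij : i != j by apply: contraNneq iNS => ->.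
have [a' ha'] := qbit_onto (fun l => if (l == i) || (l == j) then ~~ qbit a l else qbit a l).
rewrite (Eproj_row_sum agree_count nij ha') eq_sym.
by case: eqP => h; rewrite ?mul0r // (agree_count_flip jS (esym h) ha') mul1r.
Qed.

Let schur j a b := Eproj R i j a b * (agree_count b / agree_count a * v 0 a ^+ 2).

Lemma Eproj_entry_le_schur j a b : j \in S ->
  v 0 a * Eproj R i j a b * v 0 b <= schur j a b / 2%:R + schur j b a / 2%:R.
Proof.
move=> jS; rewrite /schur (Eproj_sym R i j b a).
have [-> | nz] := eqVneq (Eproj R i j a b) 0; first by rewrite !(mulr0, mul0r) addr0.
have [ha hb] := Eproj_neq0 nz.
set E := Eproj R i j a b.
have -> : v 0 a * E * v 0 b = E * (v 0 a * v 0 b) by ring.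
have -> : E * (agree_count b / agree_count a * v 0 a ^+ 2) / 2%:R +
          E * (agree_count a / agree_count b * v 0 b ^+ 2) / 2%:R =
          E * (agree_count b / agree_count a * v 0 a ^+ 2 / 2%:R +
               agree_count a / agree_count b * v 0 b ^+ 2 / 2%:R) by ring.
rewrite ler_wpM2l ?Eproj_ge0 //.
exact: weighted_amgm (agree_count_gt0 jS ha) (agree_count_gt0 jS hb).
Qed.

Lemma qform_Eproj_le j : j \in S ->
  qform v (Eproj R i j) <=
    \sum_a v 0 a ^+ 2 / agree_count a *
      ((qbit a j == qbit a i)%:R * ((#|S|%:R + 1) / 2%:R)).
Proof.
move=> jS.
have symmetrize : \sum_a \sum_b (schur j a b / 2%:R + schur j b a / 2%:R) =
                  \sum_a \sum_b schur j a b.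
  rewrite (eq_bigr (fun a => \sum_b schur j a b / 2%:R + \sum_b schur j b a / 2%:R));
    last by move=> a _; rewrite big_split.
  rewrite big_split /= [X in _ + X]exchange_big /=.
  have -> : \sum_a \sum_b schur j a b / 2%:R = (\sum_a \sum_b schur j a b) / 2%:R.
    by rewrite mulr_suml; apply: eq_bigr => a _; rewrite mulr_suml.
  lra.
have schur_row_sums : \sum_a \sum_b schur j a b =
    \sum_a v 0 a ^+ 2 / agree_count a *
      ((qbit a j == qbit a i)%:R * ((#|S|%:R + 1) / 2%:R)).
  apply: eq_bigr => a _; rewrite -(Eproj_row_agree_count a jS) mulr_sumr.
  by apply: eq_bigr => b _; rewrite /schur; ring.
rewrite -schur_row_sums -symmetrize; apply: ler_sum => a _; apply: ler_sum => b _.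
exact: Eproj_entry_le_schur.
Qed.

Lemma star_bound :
  \sum_(j in S) qform v (Eproj R i j) <= (#|S|%:R + 1) / 2%:R * sqnorm v.
Proof.
apply: le_trans (ler_sum _ (fun j jS => qform_Eproj_le jS)) _.
rewrite exchange_big /= /sqnorm mulr_sumr; apply: ler_sum => a _.
rewrite -mulr_sumr -mulr_suml -/(agree_count a).
have [-> | nz] := eqVneq (agree_count a) 0; last by rewrite mulrA divfK // mulrC.
by rewrite mul0r mulr0 mulr_ge0 ?sqr_ge0 // divr_ge0 ?addr_ge0 ?ler0n ?ler01.
Qed.

End StarBound.

Section FractionalMatching.
Variables (R : realType) (n : nat) (w : 'M[R]_n).
Hypothesis w_ge0 : forall i j, 0 <= w i j.

Definition total_weight : R := \sum_(i < n) \sum_(j < n | (i < j)%N) w i j.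

Lemma fm_feasible_le1 (x : 'I_n -> 'I_n -> R) i j : fm_feasible x -> i != j -> x i j <= 1.
Proof.
move=> [_ [x_ge0 x_star]] nij; apply: le_trans (x_star i).
by rewrite (bigD1 j) 1?eq_sym //= lerDl sumr_ge0.
Qed.

Lemma fm_objective_le_total x : fm_feasible x -> fm_objective w x <= total_weight.
Proof.
move=> fx; apply: ler_sum => i _; apply: ler_sum => j ij.
by rewrite ler_piMr ?fm_feasible_le1 // neq_ltn ij.
Qed.

Lemma fm_objective_le_LP x : fm_feasible x -> fm_objective w x <= LP w.
Proof.
move=> fx; apply: ub_le_sup; last by exists x.
by exists total_weight => _ [z [fz ->]]; exact: fm_objective_le_total.
Qed.

Lemma LP_ge0 : 0 <= LP w.
Proof.
have f0 : fm_feasible (fun _ _ : 'I_n => 0 : R) by split=> //; split=> // i; rewrite big1.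
apply: le_trans (fm_objective_le_LP f0); rewrite /fm_objective big1 // => i _.
by rewrite big1 // => j _; rewrite mulr0.
Qed.

Lemma total_weight_ge0 : 0 <= total_weight.
Proof. by apply: sumr_ge0 => i _; apply: sumr_ge0. Qed.

End FractionalMatching.

Section Eigenvector.
Variables (R : realType) (n : nat) (v : 'rV[R]_(2 ^ n)).
Hypothesis v_neq0 : v != 0.

Lemma sqnorm_gt0 : 0 < sqnorm v.
Proof.
have [b vb] : exists b, v 0 b != 0.
  apply/existsP; move: v_neq0; apply: contraNT; rewrite negb_exists => /forallP h.
  by apply/eqP/rowP => b; rewrite mxE; apply/eqP; have := h b; rewrite negbK.
rewrite /sqnorm (bigD1 b) //= ltr_pwDl ?sumr_ge0 // => [|a _]; last exact: sqr_ge0.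
by rewrite lt_def sqr_ge0 andbT sqrf_eq0.
Qed.

Variable (w : 'M[R]_n).

Lemma qform_Hw : qform v (Hw w) =
  \sum_(i < n) \sum_(j < n | (i < j)%N) w i j * qform v (Eproj R i j).
Proof.
rewrite /Hw (big_morph _ (qformD v) (qform0 v)); apply: eq_bigr => i _.
by rewrite (big_morph _ (qformD v) (qform0 v)); apply: eq_bigr => j _; exact: qformZ.
Qed.

Definition epr_overlap (i j : 'I_n) : R := qform v (Eproj R i j) / sqnorm v.

Definition star_matching (i j : 'I_n) : R :=
  if i == j then 0 else Num.max 0 (2%:R * epr_overlap i j - 1).

Lemma star_matching_feasible : fm_feasible star_matching.
Proof.
have N0 := sqnorm_gt0.
split; first by move=> i j; rewrite /star_matching /epr_overlap eq_sym EprojC.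
split; first by move=> i j; rewrite /star_matching; case: eqP => // _; rewrite le_max lexx.
move=> i; pose S := [set j | (j != i) && (1 < 2%:R * epr_overlap i j)].
have iNS : i \notin S by rewrite inE eqxx.
have -> : \sum_(j < n | j != i) star_matching i j =
          \sum_(j in S) (2%:R * epr_overlap i j - 1).
  rewrite big_mkcond [RHS]big_mkcond; apply: eq_bigr => j _ /=.
  rewrite inE /star_matching eq_sym; case: eqP => //= _.
  case: (boolP (1 < _)) => h; first by rewrite max_r // subr_ge0 ltW.
  by rewrite max_l // subr_le0 leNgt.
rewrite big_split /= sumr_const -mulr_sumr mulNrn -mulr_suml.
have : (\sum_(j in S) qform v (Eproj R i j)) / sqnorm v <= (#|S|%:R + 1) / 2%:R.
  by rewrite ler_pdivrMr //; exact: star_bound.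
lra.
Qed.

Lemma eigenvalue_le lam : v *m Hw w = lam *: v -> (forall i j, 0 <= w i j) ->
  lam <= (total_weight w + LP w) / 2%:R.
Proof.
move=> hv w_ge0.
have lamE : lam = \sum_(i < n) \sum_(j < n | (i < j)%N) w i j * epr_overlap i j.
  rewrite -[lam](mulfK (lt0r_neq0 sqnorm_gt0)) -(qform_eigen hv) qform_Hw mulr_suml.
  by apply: eq_bigr => i _; rewrite mulr_suml; apply: eq_bigr => j _; rewrite mulrA.
apply: le_trans (_ : (total_weight w + fm_objective w star_matching) / 2%:R <= _);
  last by have := fm_objective_le_LP w_ge0 star_matching_feasible; lra.
have term_le (i j : 'I_n) : (i < j)%N ->
    w i j * epr_overlap i j <= (w i j + w i j * star_matching i j) / 2%:R.
  move=> ij; have nij : (i == j) = false by apply/negbTE; rewrite neq_ltn ij.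
  have x_ge : 2%:R * epr_overlap i j - 1 <= star_matching i j.
    by rewrite /star_matching nij le_max lexx orbT.
  have := ler_wpM2l (w_ge0 i j) x_ge; rewrite mulrBr mulr1 mulrCA; lra.
rewrite /total_weight /fm_objective -big_split mulr_suml lamE.
apply: ler_sum => i _; rewrite -big_split mulr_suml; apply: ler_sum => j ij.
exact: term_le.
Qed.

End Eigenvector.

Theorem mainTheorem7 (R : realType) (n : nat) (w : 'M[R]_n)
  (wsym : forall i j, w i j = w j i) (wnn : forall i j, 0 <= w i j) :
  lambda_max (Hw w) <=
    ((\sum_(i < n) \sum_(j < n | (i < j)%N) w i j) + LP w) / 2%:R.
Proof.
rewrite /lambda_max -/(total_weight w).
have [ne | empty] := pselect (nonempty [set a : R | eigenvalue (Hw w) a]).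
  apply: ge_sup => // lam /eigenvalueP [v hv v_neq0].
  exact (eigenvalue_le v_neq0 hv wnn).
rewrite sup_out; last by case.
by rewrite divr_ge0 ?ler0n // addr_ge0 ?(total_weight_ge0 wnn) ?(LP_ge0 wnn).
Qed.
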